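(* If $k\ge2$ is a prime power, then $q''_0(2,k,k^2)=k^2-\lfloor\frac{k-1}{2}\rfloor$; that is, the smallest $q$ for which there exists a $(k^2,k^2-k,k^2-1)_q$ code of size $k^2+k$ is $k^2-\lfloor\frac{k-1}{2}\rfloor$.
   Context: $\mathbb{Z}_q=\{0,\dots,q-1\}$ (an alphabet); $\mathrm{wt}$ = number of nonzero coordinates; $d$ = Hamming distance; $J_q(n,w)$ = weight-$w$ words of $\mathbb{Z}_q^n$. An $(n,w,d)_q$ code of size $M$ is a subset $C\subseteq J_q(n,w)$ with $|C|=M$ and pairwise distances at least $d$. For $t,k,n$ such that a Steiner system $S(t,k,n)$ exists, $q''_0(t,k,n)$ is the smallest $q$ for which an $(n,n-k,n-t+1)_q$ code of size $\binom{n}{t}/\binom{k}{t}$ exists. *)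

From mathcomp Require Import all_boot.
Set Implicit Arguments. Unset Strict Implicit. Unset Printing Implicit Defensive.

Definition word (n q : nat) := {ffun 'I_n -> 'I_q}.

Definition wt (n q : nat) (x : word n q) : nat :=
  #|[set i : 'I_n | nat_of_ord (x i) != 0]|.

Definition hdist (n q : nat) (x y : word n q) : nat :=
  #|[set i : 'I_n | x i != y i]|.

Definition is_code (n w d q : nat) (C : {set word n q}) : Prop :=
  (forall x, x \in C -> wt x = w) /\
  (forall x y, x \in C -> y \in C -> x != y -> d <= hdist x y).

Definition code_exists (n w d q M : nat) : Prop :=
  exists C : {set word n q}, #|C| = M /\ is_code w d C.

Definition is_q0'' (t k n q0 : nat) : Prop :=
  let P := fun q => code_exists n (n - k) (n - t + 1) q ('C(n, t) %/ 'C(k, t)) in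
  P q0 /\ (forall q, q < q0 -> ~ P q).

Definition prime_power (k : nat) : Prop :=
  exists p e, prime p /\ 0 < e /\ k = p ^ e.

(* Lower bound: two codewords of an (n, w, n-1)_q code agree in at most one
   coordinate, so the number of ordered pairs of codewords agreeing at some
   coordinate, which is the sum over coordinates i and symbols s of the square of
   the number m(i,s) of codewords with symbol s at i, is at most M (n + M - 1).
   Bounding each coordinate's contribution below through (a - j)(a - j - 1) >= 0,
   with j = k for the zero symbol and j = 1 for the others, forces
   2k(q - 1) >= (k + 1)(k - 1)(2k - 1) when n = k^2, w = k^2 - k, M = k^2 + k,
   i.e. q >= k^2 - floor((k-1)/2).

   Upper bound: index the coordinates by the points and the codewords by the lines
   of the affine plane over F_k. A line is 0 on its own points; at a point t the
   k^2 - 1 lines missing t get nonzero symbols, all distinct except that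
   h = floor((k-1)/2) pairs of parallel lines share one. Two lines then agree only
   at their common point and at a point where they are paired, provided each pair
   is used at a single point: at (x, y) the paired lines have slope x and their
   intercepts form a matching of Z_k avoiding the intercept y - x^2 of the slope-x
   line through (x, y), taken from a fixed family of such matchings, one per
   avoided vertex, with no edge used twice. *)

From mathcomp Require Import all_boot all_algebra finfield zify ring.
Set Implicit Arguments. Unset Strict Implicit. Unset Printing Implicit Defensive.
Import GRing.Theory.

Lemma card_set_sum_bool (T : finType) (P : pred T) :
  #|[set i | P i]| = \sum_i (P i : nat).
Proof. by rewrite -sum1dep_card big_mkcond; apply: eq_bigr => i _; case: (P i). Qed.

Lemma sum_bool_compl (T : finType) (P : pred T) :
  \sum_i (P i : nat) + \sum_i (~~ P i : nat) = #|T|.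
Proof. by rewrite -big_split -sum1_card; apply: eq_bigr => i _; case: (P i). Qed.

Lemma card_set_compl (T : finType) (P : pred T) :
  #|[set t | P t]| + #|[set t | ~~ P t]| = #|T|.
Proof. by rewrite !card_set_sum_bool sum_bool_compl. Qed.

Lemma sum_eq_bool (T : finType) (P : pred T) (a : T) :
  \sum_(s | P s) (a == s : nat) = P a.
Proof.
rewrite big_mkcond (bigD1 a) //= eqxx big1 ?addn0; first by case: (P a).
by move=> s /negbTE; rewrite eq_sym => ->; case: (P s).
Qed.

Section CountingBound.
Variables (n q : nat).
Implicit Types (C : {set word n q.+1}) (x y : word n q.+1).

Definition agreements x y : nat := \sum_i (x i == y i : nat).

Lemma agreements_hdist x y : agreements x y + hdist x y = n.
Proof.
by rewrite /hdist card_set_sum_bool /agreements sum_bool_compl card_ord.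
Qed.

Lemma wtE x : wt x = \sum_i (x i != ord0 : nat).
Proof. exact: card_set_sum_bool. Qed.

Definition symbol_count C i s : nat := \sum_(x in C) (x i == s : nat).

Lemma sum_symbol_count_sq C :
  \sum_i \sum_s symbol_count C i s ^ 2 = \sum_(x in C) \sum_(y in C) agreements x y.
Proof.
transitivity (\sum_i \sum_(x in C) \sum_(y in C) (x i == y i : nat)); last first.
  by rewrite exchange_big; apply: eq_bigr => x _; rewrite exchange_big.
apply: eq_bigr => i _.
transitivity (\sum_s \sum_(x in C) \sum_(y in C) ((x i == s) * (y i == s))).
  apply: eq_bigr => s _; rewrite /symbol_count expnS expn1 big_distrl.
  by apply: eq_bigr => x _; rewrite big_distrr.
rewrite exchange_big; apply: eq_bigr => x _.
rewrite exchange_big; apply: eq_bigr => y _.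
rewrite (bigD1 (x i)) //= eqxx mul1n big1 ?addn0 1?eq_sym //.
by move=> s /negbTE; rewrite eq_sym => ->.
Qed.

Lemma sum_agreements_le C :
  (forall x y, x \in C -> y \in C -> x != y -> n.-1 <= hdist x y) ->
  \sum_(x in C) \sum_(y in C) agreements x y <= #|C| * (n + #|C|.-1).
Proof.
move=> Cdist; rewrite -sum_nat_const; apply: leq_sum => x xC.
rewrite (bigD1 x) //= leq_add //.
  by rewrite -(agreements_hdist x x) leq_addr.
apply: (@leq_trans (\sum_(y in C | y != x) 1)).
  apply: leq_sum => y /andP[yC yx].
  have := agreements_hdist x y; have := Cdist x y xC yC; rewrite eq_sym yx; lia.
by rewrite sum1_card (cardD1 x C) xC; apply/eq_leq/eq_card => y; rewrite !inE andbC.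
Qed.

Lemma sum_symbol_count_nonzero C :
  \sum_i \sum_(s < q.+1 | s != ord0) symbol_count C i s = \sum_(x in C) wt x.
Proof.
under eq_bigr => i _ do rewrite exchange_big.
rewrite exchange_big; apply: eq_bigr => x _; rewrite wtE.
by apply: eq_bigr => i _; rewrite sum_eq_bool.
Qed.

Lemma sum_symbol_count_zero C :
  \sum_i symbol_count C i ord0 = \sum_(x in C) (n - wt x).
Proof.
rewrite exchange_big; apply: eq_bigr => x _.
have := sum_bool_compl (fun i => x i == ord0); rewrite /= card_ord -wtE; lia.
Qed.

Lemma quadratic_nat_bound j a : (2 * j + 1) * a <= a ^ 2 + j * j.+1.
Proof. case: (leqP a j) => ?; nia. Qed.

Lemma sum_square_bound j (m : 'I_q.+1 -> nat) :
  (2 * j + 1) * m ord0 + 3 * \sum_(s < q.+1 | s != ord0) m s <=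
  \sum_s m s ^ 2 + j * j.+1 + 2 * q.
Proof.
have nonzero_bound : 3 * \sum_(s < q.+1 | s != ord0) m s <=
    \sum_(s < q.+1 | s != ord0) m s ^ 2 + 2 * q.
  have -> : 2 * q = \sum_(s < q.+1 | s != ord0) 2.
    by rewrite sum_nat_const cardC1 card_ord mulnC.
  by rewrite big_distrr -big_split; apply: leq_sum => s _; apply: (quadratic_nat_bound 1).
have := quadratic_nat_bound j (m ord0).
have -> : \sum_s m s ^ 2 = m ord0 ^ 2 + \sum_(s < q.+1 | s != ord0) m s ^ 2.
  by rewrite (bigD1 ord0).
lia.
Qed.

Lemma code_counting_bound w j C : is_code w n.-1 C ->
  (2 * j + 1) * (#|C| * (n - w)) + 3 * (#|C| * w) <=
  #|C| * (n + #|C|.-1) + n * (j * j.+1) + n * (2 * q).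
Proof.
move=> [Cwt Cdist].
have sum_wt : \sum_(x in C) wt x = #|C| * w.
  by rewrite -sum_nat_const; apply: eq_bigr => x /Cwt.
have sum_co_wt : \sum_(x in C) (n - wt x) = #|C| * (n - w).
  by rewrite -sum_nat_const; apply: eq_bigr => x /Cwt ->.
have summed : (2 * j + 1) * \sum_i symbol_count C i ord0 +
    3 * \sum_i \sum_(s < q.+1 | s != ord0) symbol_count C i s <=
    \sum_i \sum_s symbol_count C i s ^ 2 + n * (j * j.+1) + n * (2 * q).
  have sum_const c : n * c = \sum_(i < n) c by rewrite sum_nat_const card_ord.
  rewrite !big_distrr !sum_const -!big_split.
  by apply: leq_sum => i _; apply: sum_square_bound.
move: summed; rewrite sum_symbol_count_zero sum_symbol_count_nonzero.
rewrite sum_symbol_count_sq sum_wt sum_co_wt => /leq_trans; apply.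
by rewrite !leq_add2r; apply: sum_agreements_le.
Qed.

End CountingBound.

Lemma card_enum_val_set (T : finType) (P : pred T) :
  #|[set i : 'I_#|T| | P (enum_val i)]| = #|[set t | P t]|.
Proof.
rewrite -(on_card_preimset (onW_bij _ (@enum_val_bij T))).
by apply: eq_card => i; rewrite !inE.
Qed.

Lemma code_of_labels (T I : finType) q w (lab : I -> T -> 'I_q) :
  1 < #|T| ->
  (forall a, #|[set t | nat_of_ord (lab a t) != 0]| = w) ->
  (forall a b, a != b -> #|[set t | lab a t == lab b t]| <= 1) ->
  code_exists #|T| w #|T|.-1 q #|I|.
Proof.
move=> T_gt1 lab_wt lab_agree.
pose word_of a : word #|T| q := [ffun i => lab a (enum_val i)].
have word_dist a b : a != b -> #|T|.-1 <= hdist (word_of a) (word_of b).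
  move=> ab; have := card_set_compl (fun t => lab a t == lab b t).
  have -> : hdist (word_of a) (word_of b) = #|[set t | lab a t != lab b t]|.
    rewrite -(card_enum_val_set (fun t => lab a t != lab b t)).
    by apply: eq_card => i; rewrite !inE !ffunE.
  by have := lab_agree a b ab; lia.
have word_inj : injective word_of.
  move=> a b eq_ab; apply/eqP; apply: contraT => ab.
  have := word_dist a b ab; rewrite eq_ab /hdist (eq_card (B := pred0)) ?card0.
    by move: T_gt1; case: #|T| => [|[|m]].
  by move=> i; rewrite !inE eqxx.
exists (word_of @: [set: I]); split; first by rewrite card_imset ?cardsT.
split=> [_ /imsetP [a _ ->] | _ _ /imsetP [a _ ->] /imsetP [b _ ->] ab].
  rewrite /wt -(lab_wt a) -(card_enum_val_set (fun t => nat_of_ord (lab a t) != 0)).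
  by apply: eq_card => i; rewrite !inE !ffunE.
by apply: word_dist; apply: contraNneq ab => ->.
Qed.

(* [paired t l1 l2]: at the point [t] the line [l2] reuses the symbol of [l1]. *)
Section IncidenceLabels.
Variables (T L : finType) (incident : L -> T -> bool).
Hypothesis lines_meet_once : forall l1 l2 t t', l1 != l2 ->
  incident l1 t -> incident l2 t -> incident l1 t' -> incident l2 t' -> t = t'.
Variables (paired : T -> L -> L -> bool) (q : nat).
Hypothesis paired_parallel : forall t l1 l2, paired t l1 l2 ->
  [/\ ~~ incident l1 t, ~~ incident l2 t & forall t', ~~ (incident l1 t' && incident l2 t')].
Hypothesis paired_functional : forall t l1 l2 l3, paired t l1 l2 -> paired t l1 l3 -> l2 = l3.
Hypothesis paired_no_chain : forall t l1 l2 l3, paired t l2 l1 -> paired t l1 l3 -> False.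
Hypothesis paired_once : forall t t' l1 l2,
  paired t l1 l2 || paired t l2 l1 -> paired t' l1 l2 || paired t' l2 l1 -> t = t'.
Hypothesis few_colours : forall t,
  #|[set l | ~~ incident l t]| - #|[set l | [exists l', paired t l' l]]| <= q.

Definition partner t l := odflt l [pick l' | paired t l' l].
Definition representatives t := partner t @: [set l | ~~ incident l t].
Definition colour t l := index (partner t l) (enum (representatives t)).
Definition incidence_label l t : 'I_q.+1 :=
  if incident l t then ord0 else inord (colour t l).+1.

Lemma partner_eq t l1 l2 : l1 != l2 -> partner t l1 = partner t l2 ->
  paired t l1 l2 || paired t l2 l1.
Proof.
rewrite /partner => l12; case: pickP => [a al1|no1]; case: pickP => [b bl2|no2] /= eq_ab.
- by subst b; move: l12; rewrite (paired_functional al1 bl2) eqxx.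
- by rewrite -eq_ab al1 orbT.
- by rewrite eq_ab bl2.
- by rewrite eq_ab eqxx in l12.
Qed.

Lemma representatives_sub t : representatives t \subset
  [set l | ~~ incident l t] :\: [set l | [exists l', paired t l' l]].
Proof.
apply/subsetP => r /imsetP [l]; rewrite inE => l_off ->; rewrite /partner.
case: pickP => [a al|no_partner] /=; rewrite !inE.
  have [a_off _ _] := paired_parallel al; rewrite a_off andbT.
  by apply/negP => /existsP [a' a'a]; apply: paired_no_chain a'a al.
by rewrite l_off andbT; apply/negP => /existsP [a' a'l]; have := no_partner a'; rewrite a'l.
Qed.

Lemma card_representatives t : #|representatives t| <= q.
Proof.
apply: leq_trans (subset_leq_card (representatives_sub t)) _.
rewrite cardsDS; first exact: few_colours.
by apply/subsetP => l; rewrite !inE => /existsP [a /paired_parallel []].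
Qed.

Lemma partner_in_representatives t l : ~~ incident l t ->
  partner t l \in enum (representatives t).
Proof. by move=> l_off; rewrite mem_enum; apply: imset_f; rewrite inE. Qed.

Lemma incidence_labelE l t : ~~ incident l t ->
  nat_of_ord (incidence_label l t) = (colour t l).+1.
Proof.
move=> l_off; rewrite /incidence_label (negbTE l_off) inordK // ltnS.
apply: leq_trans (card_representatives t).
by rewrite cardE index_mem partner_in_representatives.
Qed.

Lemma incidence_label_eq0 l t : (nat_of_ord (incidence_label l t) != 0) = ~~ incident l t.
Proof.
by case: (boolP (incident l t)) => [l_on|/incidence_labelE ->]; rewrite ?/incidence_label ?l_on.
Qed.

Lemma incidence_label_agree l1 l2 : l1 != l2 ->
  #|[set t | incidence_label l1 t == incidence_label l2 t]| <= 1.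
Proof.
move=> l12.
have same_label t : incidence_label l1 t == incidence_label l2 t ->
    (incident l1 t && incident l2 t) || (paired t l1 l2 || paired t l2 l1).
  move=> /eqP/(congr1 val) /=.
  case: (boolP (incident l1 t)) => l1t; case: (boolP (incident l2 t)) => l2t //=.
  - by rewrite (incidence_labelE l2t) /incidence_label l1t.
  - by rewrite (incidence_labelE l1t) /incidence_label l2t.
  rewrite !incidence_labelE // => -[] same_colour; apply: partner_eq => //.
  by apply: (index_inj l1 _ _ same_colour); apply: partner_in_representatives.
have disjoint t t' : paired t l1 l2 || paired t l2 l1 -> ~~ (incident l1 t' && incident l2 t').
  by case/orP => /paired_parallel [_ _ /(_ t')]; rewrite // andbC.
apply/card_le1_eqP => t t'; rewrite !inE => /same_label + /same_label.
case/orP => [/andP[l1t l2t]|pt]; case/orP => [/andP[l1t' l2t']|pt'].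
- exact: lines_meet_once l12 l1t' l2t' l1t l2t.
- by have := disjoint t' t pt'; rewrite l1t l2t.
- by have := disjoint t t' pt; rewrite l1t' l2t'.
- exact: paired_once pt' pt.
Qed.

Lemma incidence_code_exists w : 1 < #|T| ->
  (forall l, #|[set t | ~~ incident l t]| = w) ->
  code_exists #|T| w #|T|.-1 q.+1 #|L|.
Proof.
move=> T_gt1 off_card; apply: (code_of_labels (lab := incidence_label)) => //.
  by move=> l; rewrite -(off_card l); apply: eq_card => t; rewrite !inE incidence_label_eq0.
exact: incidence_label_agree.
Qed.

End IncidenceLabels.

Record pairing_scheme (k h : nat) (pr : nat -> nat -> nat * nat) : Prop := PairingScheme {
  pairing_proper : forall c i, c < k -> 0 < i <= h ->
    [&& (pr c i).1 < k, (pr c i).2 < k, (pr c i).1 != c,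
        (pr c i).2 != c & (pr c i).1 != (pr c i).2];
  pairing_disjoint : forall c i i', c < k -> 0 < i <= h -> 0 < i' <= h ->
    [|| (pr c i).1 == (pr c i').1, (pr c i).1 == (pr c i').2,
        (pr c i).2 == (pr c i').1 | (pr c i).2 == (pr c i').2] -> i = i';
  pairing_centre : forall c c' i i', c < k -> c' < k -> 0 < i <= h -> 0 < i' <= h ->
    ((pr c i).1 == (pr c' i').1) && ((pr c i).2 == (pr c' i').2) ||
    ((pr c i).1 == (pr c' i').2) && ((pr c i).2 == (pr c' i').1) -> c = c'
}.

Lemma modn_small_or_sub x m : 0 < m -> x < 2 * m ->
  (x < m /\ x %% m = x) \/ (m <= x /\ x %% m = x - m).
Proof.
move=> m_gt0 x_lt; case: (ltnP x m) => x_m; first by left; rewrite modn_small.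
by right; split => //; rewrite -{1}(subnK x_m) modnDr modn_small //; lia.
Qed.

Ltac case_modn :=
  repeat match goal with |- context [?x %% ?m] =>
    have := @modn_small_or_sub x m ltac:(lia) ltac:(lia);
    generalize (x %% m); intros ? ?
  end.

Definition odd_pairing h c i := ((c + i) %% h.*2.+1, (c + h.*2.+1 - i) %% h.*2.+1).

(* For c <= 2h the pair {c+h, c+h+1} of the odd scheme becomes {2h+1, c+h}; the
   freed consecutive pairs {j, j+1} supply the pairs at c = 2h+1. *)
Definition even_pairing h c i :=
  if c < h.*2.+1 then
    if i == h then (h.*2.+1, (c + h) %% h.*2.+1) else odd_pairing h c i
  else (2 * i - 2, 2 * i - 1).

Lemma odd_pairing_scheme h : pairing_scheme h.*2.+1 h (odd_pairing h).
Proof.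
by split=> [c i ? ? | c i i' ? ? ? | c c' i i' ? ? ? ?]; rewrite /odd_pairing /=;
  case_modn; lia.
Qed.

Lemma even_pairing_scheme h : pairing_scheme h.*2.+2 h (even_pairing h).
Proof.
by split=> [c i ? ? | c i i' ? ? ? | c c' i i' ? ? ? ?];
  rewrite /even_pairing /odd_pairing; repeat case: ifP => ?; rewrite /=; case_modn; lia.
Qed.

Lemma pairing_scheme_exists k : 2 <= k -> exists pr, pairing_scheme k ((k - 1) %/ 2) pr.
Proof.
move=> k_ge2; set h := (k - 1) %/ 2.
have [k_odd|k_even] := boolP (odd k).
  have -> : k = h.*2.+1 by rewrite /h; lia.
  by exists (odd_pairing h); apply: odd_pairing_scheme.
have -> : k = h.*2.+2 by rewrite /h; lia.
by exists (even_pairing h); apply: even_pairing_scheme.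
Qed.

Section AffinePlane.
Variables (F : finFieldType) (h : nat) (pr : nat -> nat -> nat * nat).
Hypothesis scheme : pairing_scheme #|F| h pr.

Definition on_line (l : option F * F) (t : F * F) : bool :=
  match l with (Some m, c) => t.2 == (m * t.1 + c)%R | (None, c) => t.1 == c end.

Lemma affine_lines_meet_once l1 l2 t t' : l1 != l2 ->
  on_line l1 t -> on_line l2 t -> on_line l1 t' -> on_line l2 t' -> t = t'.
Proof.
case: t t' => x y [x' y'].
case: l1 l2 => [[m|] c] [[m'|] c'] l12 /=; last first.
- by move=> /eqP x_c /eqP x_c'; move: l12; rewrite -x_c -x_c' eqxx.
- by move=> /eqP -> /eqP -> /eqP -> /eqP ->.
- by move=> /eqP -> /eqP -> /eqP -> /eqP ->.
move=> /eqP y1 /eqP y2 /eqP y1' /eqP y2'.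
have [mm'|mm'] := eqVneq m m'.
  by subst m'; move: l12; rewrite (addrI _ (etrans (esym y1) y2)) eqxx.
have slope_diff : (m - m' != 0)%R by rewrite subr_eq0.
have xx' : x = x'.
  have slope_mul z : ((m - m') * z = (m * z + c) - (m' * z + c') + (c' - c))%R by ring.
  by apply: (mulfI slope_diff); rewrite !slope_mul -y1 -y2 -y1' -y2' !subrr.
by rewrite y1 y1' xx'.
Qed.

Definition field_elt n : F := nth 0%R (enum F) n.
Definition field_rank (x : F) : nat := index x (enum F).

Lemma field_rank_lt x : field_rank x < #|F|.
Proof. by rewrite cardE index_mem mem_enum. Qed.

Lemma field_rankK x : field_elt (field_rank x) = x.
Proof. by rewrite /field_elt /field_rank nth_index ?mem_enum. Qed.

Lemma field_elt_inj a b : a < #|F| -> b < #|F| -> field_elt a = field_elt b -> a = b.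
Proof.
by move=> a_lt b_lt /eqP; rewrite /field_elt nth_uniq ?enum_uniq -?cardE // => /eqP.
Qed.

Definition centre (t : F * F) : nat := field_rank (t.2 - t.1 * t.1)%R.

Lemma centre_lt t : centre t < #|F|.
Proof. exact: field_rank_lt. Qed.

(* At [t = (x, y)] the pairs of the scheme centred at the intercept [y - x^2] of the
   slope-[x] line through [t] pair up the other lines of slope [x]: a pair thus
   determines the slope [x] and, through its centre, [y]. *)
Definition paired (t : F * F) (l1 l2 : option F * F) : bool :=
  has (fun i => (l1 == (Some t.1, field_elt (pr (centre t) i).1)) &&
                (l2 == (Some t.1, field_elt (pr (centre t) i).2))) (iota 1 h).

Lemma pairedP t l1 l2 : paired t l1 l2 -> exists2 i, 0 < i <= h &
  l1 = (Some t.1, field_elt (pr (centre t) i).1) /\ l2 = (Some t.1, field_elt (pr (centre t) i).2).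
Proof.
by case/hasP => i; rewrite mem_iota => i_range /andP[/eqP -> /eqP ->]; exists i => //; lia.
Qed.

Lemma paired_parallel t l1 l2 : paired t l1 l2 ->
  [/\ ~~ on_line l1 t, ~~ on_line l2 t & forall t', ~~ (on_line l1 t' && on_line l2 t')].
Proof.
case/pairedP => i i_range [-> ->].
have c_lt := centre_lt t.
have c_elt : field_elt (centre t) = (t.2 - t.1 * t.1)%R := field_rankK _.
have /and5P[a_lt b_lt a_c b_c ab] := pairing_proper scheme c_lt i_range.
move: (centre t) c_lt c_elt a_lt b_lt a_c b_c ab => c c_lt c_elt a_lt b_lt a_c b_c ab.
case: t c_elt => x y /= c_elt; split.
- apply: contra a_c => /eqP y_on; apply/eqP/field_elt_inj => //.
  by rewrite c_elt y_on; ring.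
- apply: contra b_c => /eqP y_on; apply/eqP/field_elt_inj => //.
  by rewrite c_elt y_on; ring.
- move=> [x' y'] /=; apply: contra ab => /andP[/eqP y_a /eqP y_b].
  by apply/eqP/field_elt_inj => //; apply: (addrI (x * x')%R); rewrite -y_a -y_b.
Qed.

Lemma paired_functional t l1 l2 l3 : paired t l1 l2 -> paired t l1 l3 -> l2 = l3.
Proof.
case/pairedP => i i_range [-> ->]; case/pairedP => i' i'_range [[same_first] ->].
have c_lt := centre_lt t.
have /and5P[a_lt _ _ _ _] := pairing_proper scheme c_lt i_range.
have /and5P[a'_lt _ _ _ _] := pairing_proper scheme c_lt i'_range.
suff -> : i = i' by [].
apply: (pairing_disjoint scheme c_lt i_range i'_range).
by rewrite (field_elt_inj a_lt a'_lt same_first) eqxx.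
Qed.

Lemma paired_no_chain t l1 l2 l3 : paired t l2 l1 -> paired t l1 l3 -> False.
Proof.
case/pairedP => i i_range [_ ->]; case/pairedP => i' i'_range [[second_first] _].
have c_lt := centre_lt t.
have /and5P[_ b_lt _ _ ab] := pairing_proper scheme c_lt i_range.
have /and5P[a'_lt _ _ _ _] := pairing_proper scheme c_lt i'_range.
have ba' := field_elt_inj b_lt a'_lt second_first.
have ii' : i = i' by apply: (pairing_disjoint scheme c_lt i_range i'_range); rewrite ba' eqxx !orbT.
by move: ab; rewrite ba' ii' eqxx.
Qed.

Lemma field_eltK a : a < #|F| -> field_rank (field_elt a) = a.
Proof. by move=> a_lt; rewrite /field_rank /field_elt index_uniq ?enum_uniq -?cardE. Qed.

Lemma paired_ranks t l1 l2 : paired t l1 l2 -> exists2 i, 0 < i <= h &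
  [/\ l1.1 = Some t.1, l2.1 = Some t.1,
      field_rank l1.2 = (pr (centre t) i).1 & field_rank l2.2 = (pr (centre t) i).2].
Proof.
case/pairedP => i i_range [-> ->]; exists i => //.
have c_lt := centre_lt t.
have /and5P[a_lt b_lt _ _ _] := pairing_proper scheme c_lt i_range.
by rewrite /= !field_eltK.
Qed.

Lemma centre_determines t t' : t.1 = t'.1 -> centre t = centre t' -> t = t'.
Proof.
case: t t' => x y [x' y'] /= <- /(congr1 field_elt).
by rewrite /centre !field_rankK /= => /addIr ->.
Qed.

Lemma paired_once t t' l1 l2 :
  paired t l1 l2 || paired t l2 l1 -> paired t' l1 l2 || paired t' l2 l1 -> t = t'.
Proof.
by case/orP => /paired_ranks [i i_range [s1 s2 r1 r2]];
  case/orP => /paired_ranks [i' i'_range [s1' s2' r1' r2']];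
  apply: centre_determines; try congruence;
  apply: (pairing_centre scheme (centre_lt t) (centre_lt t') i_range i'_range);
  rewrite -r1 -r2 -r1' -r2' !eqxx ?orbT.
Qed.

Lemma card_on_line l : #|[set t | on_line l t]| = #|F|.
Proof.
case: l => [[m|] c].
  transitivity #|[set (x, m * x + c)%R | x in [set: F]]|.
    apply: eq_card => -[x y]; rewrite !inE /=.
    by apply/eqP/imsetP => [->|[x' _ [-> ->]]]; first by exists x.
  by rewrite card_imset ?cardsT // => x x' [].
transitivity #|[set (c, y) | y in [set: F]]|.
  apply: eq_card => -[x y]; rewrite !inE /=.
  by apply/eqP/imsetP => [->|[y' _ [-> _]]]; first by exists y.
by rewrite card_imset ?cardsT // => y y' [].
Qed.

Lemma card_off_line l : #|[set t | ~~ on_line l t]| = #|F| ^ 2 - #|F|.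
Proof.
by have := card_set_compl (on_line l); rewrite card_on_line card_prod mulnn => <-; rewrite addKn.
Qed.

Lemma card_lines_on_point t : #|[set l | on_line l t]| = #|F|.+1.
Proof.
case: t => x y.
pose line_of (o : option F) := if o is Some m then (Some m, y - m * x)%R else (None, x).
transitivity #|line_of @: [set: option F]|; last first.
  by rewrite card_imset ?cardsT ?card_option // => -[m|] [m'|] //= [] ->.
apply: eq_card => -[[m|] c]; rewrite !inE /=; apply/eqP/imsetP.
- by move=> y_eq; exists (Some m); rewrite ?inE // /line_of y_eq; congr (_, _); ring.
- by case=> [[m'|] _ //]; rewrite /line_of => -[-> ->]; ring.
- by move=> x_eq; exists None; rewrite ?inE // /line_of x_eq.
- by case=> [[m'|] _ //]; rewrite /line_of => -[->].
Qed.

Lemma card_lines_off_point t : #|[set l | ~~ on_line l t]| = #|F| ^ 2 - 1.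
Proof.
have := card_set_compl (on_line^~ t); rewrite /= card_lines_on_point card_prod card_option.
by rewrite mulSn mulnn addSnnS => /addnI <-; rewrite subn1.
Qed.

Lemma card_paired_seconds t : h <= #|[set l | [exists l', paired t l' l]]|.
Proof.
pose second i := (Some t.1, field_elt (pr (centre t) i).2).
have c_lt := centre_lt t.
have second_uniq : uniq [seq second i | i <- iota 1 h].
  rewrite map_inj_in_uniq ?iota_uniq // => i i'; rewrite !mem_iota => i_range i'_range [].
  have {}i_range : 0 < i <= h by lia.
  have {}i'_range : 0 < i' <= h by lia.
  have /and5P[_ b_lt _ _ _] := pairing_proper scheme c_lt i_range.
  have /and5P[_ b'_lt _ _ _] := pairing_proper scheme c_lt i'_range.
  move/(field_elt_inj b_lt b'_lt) => same_second.
  by apply: (pairing_disjoint scheme c_lt i_range i'_range); rewrite same_second eqxx !orbT.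
rewrite -[h in h <= _](size_iota 1) -(size_map second) -(card_uniqP second_uniq).
apply/subset_leq_card/subsetP => _ /mapP [i i_in ->]; rewrite inE.
by apply/existsP; exists (Some t.1, field_elt (pr (centre t) i).1); apply/hasP; exists i; rewrite ?eqxx.
Qed.

Lemma affine_code_exists : h < #|F| ->
  code_exists (#|F| ^ 2) (#|F| ^ 2 - #|F|) (#|F| ^ 2).-1 (#|F| ^ 2 - h) (#|F| ^ 2 + #|F|).
Proof.
move=> h_lt; have F_gt1 : 1 < #|F| := finNzRing_gt1 F.
have F_le_sq : #|F| <= #|F| ^ 2 by rewrite -mulnn leq_pmulr //; lia.
have card_points : #|{: F * F}| = #|F| ^ 2 by rewrite card_prod mulnn.
have card_lines : #|{: option F * F}| = #|F| ^ 2 + #|F|.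
  by rewrite card_prod card_option mulSn mulnn addnC.
have few_colours t : #|[set l | ~~ on_line l t]| -
    #|[set l | [exists l', paired t l' l]]| <= #|F| ^ 2 - h.+1.
  by rewrite card_lines_off_point; have := card_paired_seconds t; lia.
have points_gt1 : 1 < #|{: F * F}| by rewrite card_points; lia.
have := incidence_code_exists affine_lines_meet_once paired_parallel paired_functional
  paired_no_chain paired_once few_colours points_gt1 card_off_line.
suff -> : #|F| ^ 2 - h = (#|F| ^ 2 - h.+1).+1 by rewrite card_points card_lines.
lia.
Qed.

End AffinePlane.

Lemma affine_counting_bound k q1 : 2 <= k ->
  (2 * k + 1) * ((k ^ 2 + k) * k) + 3 * ((k ^ 2 + k) * (k ^ 2 - k)) <=
  (k ^ 2 + k) * (k ^ 2 + (k ^ 2 + k).-1) + k ^ 2 * (k * k.+1) + k ^ 2 * (2 * q1) ->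
  (k + 1) * (k - 1) * (2 * k - 1) <= 2 * k * q1.
Proof.
case: k => [|[|m]] // _.
have -> : m.+2 ^ 2 - m.+2 = m.+2 * m.+1 by rewrite -mulnn -[X in _ - X]muln1 -mulnBr subSS subn0.
have -> : (m.+2 ^ 2 + m.+2).-1 = m.+2 ^ 2 + m.+1 by rewrite addnS.
have -> : m.+2 - 1 = m.+1 by lia.
have -> : 2 * m.+2 - 1 = 2 * m + 3 by lia.
rewrite -(leq_pmul2l (ltn0Sn m.+1)) !expnS expn0 !muln1; nia.
Qed.

Lemma affine_alphabet_bound k q1 : 2 <= k ->
  (k + 1) * (k - 1) * (2 * k - 1) <= 2 * k * q1 -> k ^ 2 - (k - 1) %/ 2 <= q1.+1.
Proof.
move=> k_ge2 bound; rewrite leqNgt; apply/negP => q1_small.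
have : 2 * k * q1 <= 2 * k * (k ^ 2 - (k - 1) %/ 2 - 2) by rewrite leq_mul2l; lia.
have [|] : k = ((k - 1) %/ 2).*2.+1 \/ k = ((k - 1) %/ 2).*2.+2 by lia.
all: move: ((k - 1) %/ 2) => h k_eq; rewrite k_eq !expnS expn0 muln1 in bound *; nia.
Qed.

Lemma bin2_sq_div k : 2 <= k -> 'C(k ^ 2, 2) %/ 'C(k, 2) = k ^ 2 + k.
Proof.
move=> k_ge2; have bin2_double n : 'C(n, 2) * 2 = n * n.-1.
  by rewrite bin_ffact ffactnS ffactn1.
have -> : 'C(k ^ 2, 2) = 'C(k, 2) * (k ^ 2 + k).
  apply/eqP; rewrite -(eqn_pmul2r (isT : 0 < 2)) mulnAC bin2_double bin2_double.
  by case: k k_ge2 => [|k] // _; rewrite !expnS expn0 !muln1; apply/eqP; nia.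
by rewrite mulKn // bin_gt0.
Qed.

Lemma affine_code_alphabet_bound k q (C : {set word (k ^ 2) q}) : 2 <= k ->
  #|C| = k ^ 2 + k -> is_code (k ^ 2 - k) (k ^ 2).-1 C -> k ^ 2 - (k - 1) %/ 2 <= q.
Proof.
move=> k_ge2 card_C C_code; have k_le_sq : k <= k ^ 2 by rewrite -mulnn leq_pmulr //; lia.
case: q => [|q1] in C card_C C_code *.
  have /card_gt0P [x _] : 0 < #|C| by rewrite card_C; lia.
  have k2_gt0 : 0 < k ^ 2 by lia.
  by case: (x (Ordinal k2_gt0)).
have := code_counting_bound k C_code; rewrite card_C subKn //.
by move=> /(affine_counting_bound k_ge2) /(affine_alphabet_bound k_ge2).
Qed.

Theorem mainTheorem18 (k : nat) :
  2 <= k -> prime_power k ->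
  is_q0'' 2 k (k ^ 2) (k ^ 2 - (k - 1) %/ 2).
Proof.
move=> k_ge2 [p [e [p_prime [e_gt0 k_eq]]]].
rewrite /is_q0'' /= bin2_sq_div // (_ : k ^ 2 - 2 + 1 = (k ^ 2).-1); last by lia.
split.
  have [F _ card_F] := pPrimePowerField p_prime e_gt0; rewrite -k_eq in card_F.
  have [pr scheme] := pairing_scheme_exists k_ge2; rewrite -card_F in scheme.
  by have := affine_code_exists scheme; rewrite card_F; apply; lia.
move=> q q_lt [C [card_C C_code]].
by have := affine_code_alphabet_bound k_ge2 card_C C_code; lia.
Qed.
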